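(* Let $(s_0,s_1,\dots)$ be a Markov chain on $\mathcal S$ with transition kernel $p(s'\mid s)$ and initial distribution $\xi_0$. Let $\psi:\mathcal S\to\mathbb R^d$ and suppose there exists $M\in\mathbb R^{d\times d}$ such that $\int_{\mathcal S}\psi(s')^\top p(s'\mid s)\,ds'=\psi(s)^\top M$ for all $s\in\mathcal S$. Let $\Sigma_t:=\mathbb E[\psi(s_t)\psi(s_t)^\top\mid s_0\sim\xi_0]$ and assume $\Sigma_{t+1}$ is positive definite. Then $\|\Sigma_t^{1/2}M\Sigma_{t+1}^{-1/2}\|_2\le1$ for $t=0,1,\dots$.
   Context: $\|\cdot\|_2$ is the spectral norm; $A^{1/2}$ is the positive semidefinite square root of a positive semidefinite matrix $A$. *)

From HB Require Import structures.
From mathcomp Require Import all_boot all_order all_algebra.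
From mathcomp Require Import all_classical all_reals all_analysis.
Set Implicit Arguments. Unset Strict Implicit. Unset Printing Implicit Defensive.
Import Order.TTheory GRing.Theory Num.Theory.
Local Open Scope ring_scope.

Definition vnorm2 (R : realType) (n : nat) (x : 'cV[R]_n) : R :=
  Num.sqrt (\sum_(i < n) x i 0 ^+ 2).

Definition spec_norm (R : realType) (m n : nat) (A : 'M[R]_(m, n)) : R :=
  sup [set vnorm2 (A *m x) | x in [set x : 'cV[R]_n | vnorm2 x <= 1]]%classic.

Definition psd (R : realType) (n : nat) (A : 'M[R]_n) : Prop :=
  A^T = A /\ forall x : 'cV[R]_n, 0 <= (x^T *m A *m x) 0 0.

Definition pd (R : realType) (n : nat) (A : 'M[R]_n) : Prop :=
  A^T = A /\ forall x : 'cV[R]_n, x != 0 -> 0 < (x^T *m A *m x) 0 0.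

Definition is_psd_sqrt (R : realType) (n : nat) (A B : 'M[R]_n) : Prop :=
  psd B /\ B *m B = A.

Definition second_moment d (S : measurableType d) (R : realType) (n : nat)
  (mu : {measure set S -> \bar R}) (psi : S -> 'rV[R]_n) : 'M[R]_n :=
  \matrix_(i, j) Rintegral mu setT (fun s => psi s 0 i * psi s 0 j).

(* Substituting y = C x, the claim ||B M C^-1 y|| <= ||y|| becomes the
   comparison of quadratic forms x^T M^T Sigma_t M x <= x^T Sigma_(t+1) x, i.e.
   E[(psi(s_t) M x)^2] <= E[(psi(s_(t+1)) x)^2].  By the hypothesis on M,
   psi(s) M x is the mean of psi(s') x under the kernel k(s), so Jensen's
   inequality (mean^2 <= second moment) for each k(s), integrated against the
   law of s_t, gives exactly this. *)

From HB Require Import structures.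
From mathcomp Require Import all_boot all_order all_algebra.
From mathcomp Require Import all_classical all_reals all_analysis.
From mathcomp Require Import measurable_realfun ring.
Set Implicit Arguments. Unset Strict Implicit. Unset Printing Implicit Defensive.
Import Order.TTheory GRing.Theory Num.Theory.
Local Open Scope ring_scope.
Local Open Scope classical_set_scope.

Section quadratic_forms.
Variables (R : comNzRingType) (n : nat).

Lemma quad_formE (A : 'M[R]_n) (x : 'cV[R]_n) :
  (x^T *m A *m x) 0 0 = \sum_i \sum_j x i 0 * x j 0 * A i j.
Proof.
rewrite mxE exchange_big; apply: eq_bigr => j _; rewrite mxE mulr_suml.
by apply: eq_bigr => i _; rewrite !mxE; ring.
Qed.

Lemma sqr_row_mulmxE (v : 'rV[R]_n) (x : 'cV[R]_n) :
  ((v *m x) 0 0) ^+ 2 = \sum_i \sum_j x i 0 * x j 0 * (v 0 i * v 0 j).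
Proof.
rewrite mxE expr2 mulr_suml; apply: eq_bigr => i _; rewrite mulr_sumr.
by apply: eq_bigr => j _; ring.
Qed.

End quadratic_forms.

Section Rintegral_linear.
Context d (T : measurableType d) (R : realType) (mu : {measure set T -> \bar R}).

Lemma integrableZlR (c : R) (f : T -> R) : mu.-integrable setT (EFin \o f) ->
  mu.-integrable setT (EFin \o (fun x => c * f x)).
Proof.
move=> intf; apply: (eq_integrable measurableT _ _ _ (integrableZl measurableT c intf)).
by move=> x _ /=; rewrite EFinM.
Qed.

Lemma integrable_sumR (I : Type) (s : seq I) (F : I -> T -> R) :
  (forall i, mu.-integrable setT (EFin \o F i)) ->
  mu.-integrable setT (EFin \o (fun x => \sum_(i <- s) F i x)).
Proof.
move=> intF.
apply: (eq_integrable measurableT _ _ _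
  (integrable_sum measurableT _ (fun i _ => intF i))).
by move=> x _ /=; rewrite sumEFin.
Qed.

Lemma Rintegral_sum (I : Type) (s : seq I) (F : I -> T -> R) :
  (forall i, mu.-integrable setT (EFin \o F i)) ->
  \int[mu]_x (\sum_(i <- s) F i x) = \sum_(i <- s) \int[mu]_x F i x.
Proof.
move=> intF; elim: s => [|i s IHs].
  by under eq_Rintegral do rewrite big_nil; rewrite Rintegral_cst// mul0r big_nil.
under eq_Rintegral do rewrite big_cons.
by rewrite RintegralD// ?IHs ?big_cons//; exact: integrable_sumR.
Qed.

Variables (n : nat) (psi : T -> 'rV[R]_n) (x : 'cV[R]_n).

Hypothesis int_psi : forall i, mu.-integrable setT (fun s => (psi s 0 i)%:E).

Let int_psi_coord i : mu.-integrable setT (EFin \o (fun s => x i 0 * psi s 0 i)).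
Proof. exact: integrableZlR (int_psi i). Qed.

Lemma integrable_row_mulmx :
  mu.-integrable setT (EFin \o (fun s => (psi s *m x) 0 0)).
Proof.
apply: (eq_integrable measurableT _ _ _
  (integrable_sumR (index_enum 'I_n) int_psi_coord)).
by move=> s _ /=; rewrite mxE; under eq_bigr do rewrite mulrC.
Qed.

Lemma Rintegral_row_mulmx :
  \int[mu]_s (psi s *m x) 0 0 = ((\row_j \int[mu]_s psi s 0 j) *m x) 0 0.
Proof.
under eq_Rintegral do rewrite mxE; under eq_Rintegral do under eq_bigr do rewrite mulrC.
rewrite Rintegral_sum// mxE; apply: eq_bigr => i _.
by rewrite [RHS]mulrC mxE RintegralZl//; exact: int_psi.
Qed.

End Rintegral_linear.

Section second_moment_quadratic_form.
Context d (T : measurableType d) (R : realType) (mu : {measure set T -> \bar R}).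
Variables (n : nat) (psi : T -> 'rV[R]_n) (x : 'cV[R]_n).

Hypothesis int_psi2 :
  forall i j, mu.-integrable setT (fun s => (psi s 0 i * psi s 0 j)%:E).

Let int_psi2_coord i j :
  mu.-integrable setT (EFin \o (fun s => x i 0 * x j 0 * (psi s 0 i * psi s 0 j))).
Proof. exact: integrableZlR (int_psi2 i j). Qed.

Let int_psi2_row i : mu.-integrable setT
  (EFin \o (fun s => \sum_j x i 0 * x j 0 * (psi s 0 i * psi s 0 j))).
Proof. exact: integrable_sumR (int_psi2_coord i). Qed.

Lemma integrable_sqr_row_mulmx :
  mu.-integrable setT (EFin \o (fun s => ((psi s *m x) 0 0) ^+ 2)).
Proof.
apply: (eq_integrable measurableT _ _ _
  (integrable_sumR (index_enum 'I_n) int_psi2_row)).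
by move=> s _ /=; rewrite sqr_row_mulmxE.
Qed.

Lemma second_moment_quadE :
  (x^T *m second_moment mu psi *m x) 0 0 = \int[mu]_s ((psi s *m x) 0 0) ^+ 2.
Proof.
under eq_Rintegral do rewrite sqr_row_mulmxE.
rewrite Rintegral_sum// quad_formE; apply: eq_bigr => i _.
rewrite Rintegral_sum//; apply: eq_bigr => j _.
by rewrite RintegralZl ?mxE//; exact: int_psi2.
Qed.

End second_moment_quadratic_form.

Section Jensen_sqr.
Context d (T : measurableType d) (R : realType) (mu : {measure set T -> \bar R}).
Hypothesis mu1 : mu setT = 1%E.

Lemma sqr_Rintegral_le (f : T -> R) : mu.-integrable setT (EFin \o f) ->
  (((\int[mu]_x f x) ^+ 2)%:E <= \int[mu]_x ((f x) ^+ 2)%:E)%E.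
Proof.
move=> intf; set c := \int[mu]_x f x.
have mf2 : measurable_fun setT (EFin \o (fun x => f x ^+ 2)).
  apply/measurable_EFinP/measurable_funX/measurable_EFinP.
  exact: measurable_int intf.
have [intf2|Nintf2] := pselect (mu.-integrable setT (EFin \o (fun x => f x ^+ 2)));
  last first.
  have : ~ (\int[mu]_x (f x ^+ 2)%:E < +oo)%E.
    move=> fin2; apply: Nintf2; apply/integrableP; split => //.
    by under eq_integral do rewrite gee0_abs ?lee_fin ?sqr_ge0//.
  by move/negP; rewrite -leNgt leye_eq => /eqP ->; exact: leey.
rewrite -(fineK (integrable_fin_num measurableT intf2)) lee_fin.
have intc : mu.-integrable setT (EFin \o cst (c ^+ 2)).
  apply/integrableP; split; first exact/measurable_EFinP/measurable_cst.
  by rewrite (integral_cst _ _ (`|(c ^+ 2)%:E|)%E)// mu1 mule1 ltry.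
(* the tangent line [2 c y - c^2] of [y ^+ 2] at [c] has integral [c ^+ 2] *)
apply: (@le_trans _ _ (\int[mu]_x (2 * c * f x - c ^+ 2))).
  rewrite RintegralB//; last exact: integrableZlR.
  rewrite RintegralZl// Rintegral_cst// mu1 -/c.
  by have -> : 2 * c * c - c ^+ 2 * 1 = c ^+ 2 by ring.
apply: le_Rintegral => //.
- apply: (eq_integrable measurableT _ _ _
    (integrableB measurableT (integrableZlR (2 * c) intf) intc)).
  by move=> x _ /=; rewrite EFinB.
- move=> x _; rewrite -subr_ge0.
  have -> : f x ^+ 2 - (2 * c * f x - c ^+ 2) = (f x - c) ^+ 2 by ring.
  exact: sqr_ge0.
Qed.

End Jensen_sqr.

Section Markov_step.
Context d (S : measurableType d) (R : realType) (k : R.-pker S ~> S)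
  (P : probability S R) (Q : {measure set S -> \bar R}).
Hypothesis QE : forall A, measurable A -> Q A = (\int[P]_x k x A)%E.

(* [Q] is the composite [P \; k] of the constant kernel [P] on [unit] with [k]. *)
Lemma integral_law_step (f : S -> \bar R) : (forall z, 0 <= f z)%E ->
  measurable_fun [set: S] f -> (\int[Q]_z f z = \int[P]_y \int[k y]_z f z)%E.
Proof.
move=> f0 mf.
pose l := kprobability
  (measurable_cst (P : pprobability S R) : measurable_fun [set: unit] _).
pose k' := @kernel.kernel_snd _ _ _ unit S S R k.
rewrite (eq_measure_integral (kcomp l k' tt)); last by move=> A mA _; rewrite QE.
exact: integral_kcomp.
Qed.

Variables (n : nat) (psi : S -> 'rV[R]_n) (M : 'M[R]_n).
Hypothesis int_psi_k : forall s i, (k s).-integrable setT (fun s' => (psi s' 0 i)%:E).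
Hypothesis kM : forall s, \row_j \int[k s]_s' psi s' 0 j = psi s *m M.
Hypothesis int_P : forall i j, P.-integrable setT (fun s => (psi s 0 i * psi s 0 j)%:E).
Hypothesis int_Q : forall i j, Q.-integrable setT (fun s => (psi s 0 i * psi s 0 j)%:E).

Lemma second_moment_step (x : 'cV[R]_n) :
  ((M *m x)^T *m second_moment P psi *m (M *m x)) 0 0 <=
  (x^T *m second_moment Q psi *m x) 0 0.
Proof.
have kmean s : \int[k s]_s' (psi s' *m x) 0 0 = (psi s *m (M *m x)) 0 0.
  by rewrite Rintegral_row_mulmx// kM mulmxA.
have intP := integrable_sqr_row_mulmx (M *m x) int_P.
have intQ := integrable_sqr_row_mulmx x int_Q.
rewrite !second_moment_quadE// -lee_fin /Rintegral.
rewrite !fineK ?(integrable_fin_num measurableT intP)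
  ?(integrable_fin_num measurableT intQ)//.
rewrite integral_law_step; last 2 first.
- by move=> s; rewrite lee_fin sqr_ge0.
- exact: measurable_int intQ.
apply: ge0_le_integral => //.
- by move=> s _; rewrite lee_fin sqr_ge0.
- exact: measurable_int intP.
- apply: measurable_fun_integral_kernel; last exact: measurable_int intQ.
  + by move=> U mU; exact: measurable_kernel k _ mU.
  + by move=> s; rewrite lee_fin sqr_ge0.
- move=> s _; rewrite -kmean.
  exact: (sqr_Rintegral_le (prob_kernel s) (integrable_row_mulmx x (int_psi_k s))).
Qed.

End Markov_step.

Section spectral_norm_bound.
Variable R : realType.

Lemma vnorm2E n (v : 'cV[R]_n) : vnorm2 v = Num.sqrt ((v^T *m v) 0 0).
Proof.
by rewrite /vnorm2 mxE; congr Num.sqrt; apply: eq_bigr => i _; rewrite mxE expr2.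
Qed.

Lemma spec_norm_le1 m n (A : 'M[R]_(m, n)) :
  (forall x : 'cV[R]_n, ((A *m x)^T *m (A *m x)) 0 0 <= (x^T *m x) 0 0) ->
  spec_norm A <= 1.
Proof.
move=> Acontr; apply: ge_sup.
  by exists (vnorm2 (A *m 0)), (0 : 'cV_n); rewrite //= vnorm2E mulmx0 mxE sqrtr0 ler01.
by move=> _ [x x1 <-]; apply: le_trans x1; rewrite !vnorm2E ler_wsqrtr.
Qed.

Lemma psd_sqrt_quadE n (A B : 'M[R]_n) (x : 'cV[R]_n) : is_psd_sqrt A B ->
  ((B *m x)^T *m (B *m x)) 0 0 = (x^T *m A *m x) 0 0.
Proof. by case=> [[BT _] BB]; rewrite trmx_mul BT !mulmxA -(mulmxA _ B B) BB. Qed.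

Lemma pd_unitmx n (A : 'M[R]_n) : pd A -> A \in unitmx.
Proof.
case=> _ Apos; rewrite unitmxE unitfE; apply/negP => /det0P [v v0 vA].
by have := Apos v^T; rewrite trmx_eq0 trmxK vA mul0mx mxE ltxx => /(_ v0).
Qed.

Lemma spec_norm_whitened_le1 n (A0 A1 B C M : 'M[R]_n) :
  pd A1 -> is_psd_sqrt A0 B -> is_psd_sqrt A1 C ->
  (forall x : 'cV[R]_n, ((M *m x)^T *m A0 *m (M *m x)) 0 0 <= (x^T *m A1 *m x) 0 0) ->
  spec_norm (B *m M *m invmx C) <= 1.
Proof.
move=> A1pd sqrtB sqrtC Mcontr; apply: spec_norm_le1 => y.
have Cunit : C \in unitmx.
  by move: (pd_unitmx A1pd); rewrite -sqrtC.2 unitmx_mul => /andP[].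
set x := invmx C *m y.
have -> : B *m M *m invmx C *m y = B *m (M *m x) by rewrite /x !mulmxA.
have -> : y = C *m x by rewrite /x mulKVmx.
by rewrite (psd_sqrt_quadE _ sqrtB) (psd_sqrt_quadE _ sqrtC).
Qed.

End spectral_norm_bound.

Theorem lemma1 (d0 : measure_display) (S : measurableType d0) (R : realType)
  (d : nat) (k : R.-pker S ~> S) (xi : nat -> probability S R)
  (psi : S -> 'rV[R]_d) (M : 'M[R]_d)
  (* xi t is the law of s_t: xi 0 = xi_0 and xi (t+1) = xi t composed with k *)
  (Hxi : forall t (A : set S), measurable A ->
     xi t.+1 A = (\int[xi t]_(x in setT) k x A)%E)
  (Hpsi_meas : forall i, measurable_fun setT (fun s => psi s 0 i))
  (Hpsi_k : forall s i, (k s).-integrable setT (fun s' => (psi s' 0 i)%:E))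
  (HM : forall s, \row_j Rintegral (k s) setT (fun s' => psi s' 0 j) = psi s *m M)
  (t : nat)
  (Hint_t : forall i j, (xi t).-integrable setT (fun s => (psi s 0 i * psi s 0 j)%:E))
  (Hint_t1 : forall i j, (xi t.+1).-integrable setT (fun s => (psi s 0 i * psi s 0 j)%:E))
  (Hpd : pd (second_moment (xi t.+1) psi))
  (B C : 'M[R]_d)
  (HB : is_psd_sqrt (second_moment (xi t) psi) B)
  (HC : is_psd_sqrt (second_moment (xi t.+1) psi) C) :
  spec_norm (B *m M *m invmx C) <= 1.
Proof.
apply: spec_norm_whitened_le1 Hpd HB HC _.
exact: (second_moment_step (Q := xi t.+1) (Hxi t) Hpsi_k HM Hint_t Hint_t1).
Qed.
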